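(* Consider the production planning setting described in the context, in the non-overlapping case, with scenario set $\mathcal{U}^d$. Fix $\pmb{x}\in\mathbb{X}$ with cumulative productions $X_t=\sum_{i\in[t]}x_i$. Then the optimal value of the linear program $$\min\ \sum_{t\in[T]}\pi_t+\Gamma^d\alpha+\sum_{t\in[T]}\gamma_t$$ subject to, for all $t\in[T]$: $\pi_t\ge f_I(X_t,\widehat{D}_t)$, $\pi_t\ge f_B(X_t,\widehat{D}_t)$, $\alpha+\gamma_t\ge f_I(X_t,\widehat{D}_t-\Delta_t)-\pi_t$, $\alpha+\gamma_t\ge f_B(X_t,\widehat{D}_t+\Delta_t)-\pi_t$, $\alpha\ge 0$, $\gamma_t\ge 0$, $\pi_t$ unrestricted, equals the optimal value of the adversarial problem $\max_{\pmb{D}\in\mathcal{U}^d}\sum_{t\in[T]}\max\{f_I(X_t,D_t),f_B(X_t,D_t)\}$.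
   Context: There are $T\ge 1$ periods, $[T]=\{1,\dots,T\}$. Given are a production cost $c^P$, an inventory cost $c^I$, a backordering cost $c^B$ and a selling price $b^P$ (independent of the period), and a set $\mathbb{X}\subseteq\mathbb{R}^T_+$ of feasible production plans $\pmb{x}=(x_1,\dots,x_T)$ described by finitely many linear constraints. For a plan write $X_t=\sum_{i\in[t]}x_i$. For $t\in[T-1]$ let $f_I(X_t,D_t)=c^I(X_t-D_t)$ and $f_B(X_t,D_t)=c^B(D_t-X_t)$; for $t=T$ let $f_I(X_T,D_T)=c^I(X_T-D_T)+c^PX_T-b^PD_T$ and $f_B(X_T,D_T)=c^B(D_T-X_T)+c^PX_T-b^PX_T$. Nominal cumulative demands $\widehat{D}_t\ge 0$ satisfy $\widehat{D}_t\le\widehat{D}_{t+1}$, and deviations satisfy $0\le\Delta_t\le\widehat{D}_t$. The discrete budgeted scenario set is $\mathcal{U}^d=\{\pmb{D}\in\mathbb{R}^T: D_t\le D_{t+1}\ (t\in[T-1]),\ D_t\in[\widehat{D}_t-\Delta_t,\widehat{D}_t+\Delta_t]\ (t\in[T]),\ |\{t: D_t\ne\widehat{D}_t\}|\le\Gamma^d\}$ with integer $\Gamma^d\in\{0,\dots,T\}$. The non-overlapping case means $\widehat{D}_t+\Delta_t\le\widehat{D}_{t+1}-\Delta_{t+1}$ for all $t\in[T-1]$. *)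

(* R : realFieldType, periods indexed by 'I_T (period t+1 <-> ordinal t). *)
From HB Require Import structures.
From mathcomp Require Import all_boot all_order all_algebra.
Set Implicit Arguments. Unset Strict Implicit. Unset Printing Implicit Defensive.
Import Order.TTheory GRing.Theory Num.Theory.
Local Open Scope ring_scope.

Section Defs.
Variable R : realFieldType.

Definition cumprod (T : nat) (x : 'I_T -> R) (t : 'I_T) : R :=
  \sum_(i < T | (i <= t)%N) x i.

(* f_I, f_B; the last period (ordinal T-1) carries the production cost / revenue. *)
Definition fI (cP cI bP : R) (T : nat) (t : 'I_T) (X D : R) : R :=
  if val t == T.-1 then cI * (X - D) + cP * X - bP * D else cI * (X - D).

Definition fB (cP cB bP : R) (T : nat) (t : 'I_T) (X D : R) : R :=
  if val t == T.-1 then cB * (D - X) + cP * X - bP * X else cB * (D - X).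

Definition in_plans (T m : nat) (A : 'I_m -> 'I_T -> R) (b : 'I_m -> R)
  (x : 'I_T -> R) : Prop :=
  (forall t, 0 <= x t) /\ (forall k, \sum_(t < T) A k t * x t <= b k).

Definition in_Ud (T : nat) (Dhat Delta : 'I_T -> R) (Gamma : nat)
  (D : 'I_T -> R) : Prop :=
  [/\ (forall i j : 'I_T, val j = (val i).+1 -> D i <= D j),
      (forall t, Dhat t - Delta t <= D t <= Dhat t + Delta t)
    & (#|[set t | D t != Dhat t]| <= Gamma)%N].

Definition adv_obj (cP cI cB bP : R) (T : nat) (x D : 'I_T -> R) : R :=
  \sum_(t < T) Num.max (fI cP cI bP t (cumprod x t) (D t))
                       (fB cP cB bP t (cumprod x t) (D t)).

Definition lp_feasible (cP cI cB bP : R) (T : nat) (x Dhat Delta : 'I_T -> R)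
  (pi : 'I_T -> R) (alpha : R) (gamma : 'I_T -> R) : Prop :=
  0 <= alpha /\
  forall t : 'I_T,
    [/\ pi t >= fI cP cI bP t (cumprod x t) (Dhat t),
        pi t >= fB cP cB bP t (cumprod x t) (Dhat t),
        alpha + gamma t >= fI cP cI bP t (cumprod x t) (Dhat t - Delta t) - pi t,
        alpha + gamma t >= fB cP cB bP t (cumprod x t) (Dhat t + Delta t) - pi t
      & 0 <= gamma t].

Definition lp_obj (T : nat) (Gamma : nat) (pi : 'I_T -> R) (alpha : R)
  (gamma : 'I_T -> R) : R :=
  \sum_(t < T) pi t + Gamma%:R * alpha + \sum_(t < T) gamma t.

End Defs.

(** Write [a_t] for the period-[t] cost under nominal demand and [c_t] for its
    worst value over the deviation interval; since [f_I] is nonincreasing and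
    [f_B] nondecreasing in the demand, [c_t] is attained at an endpoint.  Every
    scenario of [U^d] costs at most [sum_t a_t + sum_(t in S) (c_t - a_t)], where
    [S] is its set of deviating periods, and conversely any [S] with [|S| <= Gamma]
    is realised by deviating to the worse endpoint on [S]; non-overlap keeps that
    scenario monotone.  So the adversarial value is [sum_t a_t] plus the largest
    sum of at most [Gamma] excesses [c_t - a_t].  The LP is the dual of this
    top-[Gamma] problem: weak duality bounds it from below, and [pi = a] together
    with the threshold [alpha] = largest excess outside an optimal [S] (or [0] if
    [|S| < Gamma]) and [gamma_t = (c_t - a_t - alpha)^+] attains the bound. *)
From HB Require Import structures.
From mathcomp Require Import all_boot all_order all_algebra.
From mathcomp Require Import lra.
Set Implicit Arguments. Unset Strict Implicit. Unset Printing Implicit Defensive.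
Import Order.TTheory GRing.Theory Num.Theory.
Local Open Scope ring_scope.

Lemma sumr_if_in (R : realFieldType) (I : finType) (S : {set I}) (a c : I -> R) :
  \sum_t (if t \in S then c t else a t) = \sum_t a t + \sum_(t in S) (c t - a t).
Proof.
rewrite [X in _ = _ + X]big_mkcond /= -big_split /=; apply: eq_bigr => t _.
by case: ifP => _; rewrite ?addr0 // addrC subrK.
Qed.

Section TopSum.
Variables (R : realFieldType) (I : finType) (k : nat) (w : I -> R).

Definition top_set : {set I} :=
  Order.arg_max set0 (fun S : {set I} => (#|S| <= k)%N) (fun S => \sum_(t in S) w t).

Lemma card_top_set : (#|top_set| <= k)%N.
Proof. by rewrite /top_set; case: arg_maxP; rewrite ?cards0. Qed.

Lemma top_set_max (S : {set I}) :
  (#|S| <= k)%N -> \sum_(t in S) w t <= \sum_(t in top_set) w t.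
Proof. by rewrite /top_set; case: arg_maxP; rewrite ?cards0 // => S0 _; apply. Qed.

Lemma sum_le_budget_dual (S : {set I}) (alpha : R) (gamma : I -> R) :
  (#|S| <= k)%N -> 0 <= alpha -> (forall t, 0 <= gamma t) ->
  (forall t, w t <= alpha + gamma t) ->
  \sum_(t in S) w t <= k%:R * alpha + \sum_t gamma t.
Proof.
move=> cardS alpha_ge0 gamma_ge0 w_le.
apply: (le_trans (y := \sum_(t in S) (alpha + gamma t))); first exact: ler_sum.
rewrite big_split /= sumr_const -[alpha *+ _]mulr_natl; apply: lerD.
  by apply: ler_wpM2r => //; rewrite ler_nat.
by rewrite [X in _ <= X](bigID (mem S)) /= lerDl sumr_ge0.
Qed.

Lemma top_set_exchange (t u : I) :
  t \in top_set -> u \notin top_set -> w u <= w t.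
Proof.
move=> t_in u_out.
have u_out' : u \notin top_set :\ t by rewrite in_setD1 (negbTE u_out) andbF.
have card_swap : #|u |: (top_set :\ t)| = #|top_set|.
  by rewrite cardsU1 u_out' (cardsD1 t top_set) t_in.
have := @top_set_max (u |: (top_set :\ t)); rewrite card_swap => /(_ card_top_set).
rewrite big_setU1 //= [X in _ <= X](big_setD1 t t_in) /=; lra.
Qed.

Definition top_threshold : R := \big[Num.max/0]_(u | u \notin top_set) w u.

Definition top_excess (t : I) : R :=
  if t \in top_set then w t - top_threshold else 0.

Lemma top_threshold_ge0 : 0 <= top_threshold.
Proof. exact: bigmax_ge_id. Qed.

Lemma le_top_threshold (u : I) : u \notin top_set -> w u <= top_threshold.
Proof. by move=> u_out; rewrite /top_threshold (bigD1 u u_out) /= le_max lexx. Qed.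

Lemma top_threshold_eq0 : (#|top_set| < k)%N -> top_threshold = 0.
Proof.
move=> card_lt; apply/le_anti; rewrite top_threshold_ge0 andbT.
apply: bigmax_le => // u u_out.
have := @top_set_max (u |: top_set); rewrite cardsU1 u_out add1n => /(_ card_lt).
rewrite big_setU1 //=; lra.
Qed.

Lemma le_top_threshold_excess (t : I) : w t <= top_threshold + top_excess t.
Proof.
rewrite /top_excess; case: ifPn => t_in; first lra.
by rewrite addr0 le_top_threshold.
Qed.

Lemma top_dual_obj :
  k%:R * top_threshold + \sum_t top_excess t = \sum_(t in top_set) w t.
Proof.
have -> : \sum_t top_excess t = \sum_(t in top_set) (w t - top_threshold).
  by rewrite [RHS]big_mkcond.
rewrite sumrB sumr_const -[top_threshold *+ _]mulr_natl.
have [card_lt | card_ge] := ltnP #|top_set| k.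
  by rewrite top_threshold_eq0 // !mulr0 subr0 add0r.
have -> : k = #|top_set| by apply/eqP; rewrite eqn_leq card_top_set card_ge.
by rewrite addrC subrK.
Qed.

Hypothesis w_ge0 : forall t, 0 <= w t.

Lemma top_threshold_le (t : I) : t \in top_set -> top_threshold <= w t.
Proof. by move=> t_in; apply: bigmax_le => // u; apply: top_set_exchange. Qed.

Lemma top_excess_ge0 (t : I) : 0 <= top_excess t.
Proof.
rewrite /top_excess; case: ifP => // t_in.
by have := top_threshold_le t_in; lra.
Qed.

End TopSum.

Lemma fI_nonincreasing (R : realFieldType) (cP cI bP : R) (T : nat) (t : 'I_T)
    (X D1 D2 : R) :
  0 <= cI -> 0 <= bP -> D1 <= D2 -> fI cP cI bP t X D2 <= fI cP cI bP t X D1.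
Proof.
move=> cI_ge0 bP_ge0 le_D.
have cI_le : cI * D1 <= cI * D2 by rewrite ler_wpM2l.
have bP_le : bP * D1 <= bP * D2 by rewrite ler_wpM2l.
by rewrite /fI; case: ifP => _; rewrite !mulrBr; lra.
Qed.

Lemma fB_nondecreasing (R : realFieldType) (cP cB bP : R) (T : nat) (t : 'I_T)
    (X D1 D2 : R) :
  0 <= cB -> D1 <= D2 -> fB cP cB bP t X D1 <= fB cP cB bP t X D2.
Proof.
move=> cB_ge0 le_D; have cB_le : cB * D1 <= cB * D2 by rewrite ler_wpM2l.
by rewrite /fB; case: ifP => _; rewrite !mulrBr; lra.
Qed.

Section Production.
Variables (R : realFieldType) (T : nat) (cP cI cB bP : R).
Variables (x Dhat Delta : 'I_T -> R) (Gamma : nat).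
Hypotheses (cI_ge0 : 0 <= cI) (cB_ge0 : 0 <= cB) (bP_ge0 : 0 <= bP).
Hypothesis Delta_ge0 : forall t, 0 <= Delta t.

Let fIt t := fI cP cI bP t (cumprod x t).
Let fBt t := fB cP cB bP t (cumprod x t).

Definition period_cost (t : 'I_T) (D : R) : R := Num.max (fIt t D) (fBt t D).

Definition nominal_cost (t : 'I_T) : R := period_cost t (Dhat t).

Definition worst_cost (t : 'I_T) : R :=
  Num.max (fIt t (Dhat t - Delta t)) (fBt t (Dhat t + Delta t)).

Definition excess (t : 'I_T) : R := worst_cost t - nominal_cost t.

Definition budget_value (S : {set 'I_T}) : R :=
  \sum_t nominal_cost t + \sum_(t in S) excess t.

Lemma period_cost_le_worst (t : 'I_T) (D : R) :
  Dhat t - Delta t <= D <= Dhat t + Delta t -> period_cost t D <= worst_cost t.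
Proof.
move=> /andP[lo hi]; rewrite ge_max !le_max.
by rewrite fI_nonincreasing // fB_nondecreasing // orbT.
Qed.

Lemma excess_ge0 (t : 'I_T) : 0 <= excess t.
Proof.
rewrite subr_ge0; apply: period_cost_le_worst.
by have := Delta_ge0 t; rewrite !lerBlDr; lra.
Qed.

Lemma budget_value_if (S : {set 'I_T}) :
  \sum_t (if t \in S then worst_cost t else nominal_cost t) = budget_value S.
Proof. exact: sumr_if_in. Qed.

Definition worst_demand (t : 'I_T) : R :=
  if fBt t (Dhat t + Delta t) <= fIt t (Dhat t - Delta t)
  then Dhat t - Delta t else Dhat t + Delta t.

Lemma worst_demand_range (t : 'I_T) :
  Dhat t - Delta t <= worst_demand t <= Dhat t + Delta t.
Proof. by have := Delta_ge0 t; rewrite /worst_demand; case: ifP => _; lra. Qed.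

Lemma period_cost_worst_demand (t : 'I_T) :
  period_cost t (worst_demand t) = worst_cost t.
Proof.
apply/le_anti; rewrite period_cost_le_worst ?worst_demand_range //=.
rewrite /worst_demand /period_cost ge_max !le_max.
case: ifPn => [fB_le | ]; first by rewrite lexx (le_trans fB_le).
by rewrite -ltNge => /ltW ->; rewrite lexx !orbT.
Qed.

Definition scenario (S : {set 'I_T}) (t : 'I_T) : R :=
  if t \in S then worst_demand t else Dhat t.

Lemma scenario_range (S : {set 'I_T}) (t : 'I_T) :
  Dhat t - Delta t <= scenario S t <= Dhat t + Delta t.
Proof.
rewrite /scenario; case: ifP => _; first exact: worst_demand_range.
by have := Delta_ge0 t; lra.
Qed.

Lemma scenario_in_Ud (S : {set 'I_T}) :
  (forall i j : 'I_T, val j = (val i).+1 -> Dhat i + Delta i <= Dhat j - Delta j) ->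
  (#|S| <= Gamma)%N -> in_Ud Dhat Delta Gamma (scenario S).
Proof.
move=> non_overlap cardS; split; last 1 first.
- apply: leq_trans cardS; apply: subset_leq_card; apply/subsetP => t.
  by rewrite inE /scenario; case: ifP; rewrite ?eqxx.
- move=> i j ij; have /andP[_ hi] := scenario_range S i.
  have /andP[lo _] := scenario_range S j; have := non_overlap i j ij; lra.
- exact: scenario_range.
Qed.

Lemma adv_obj_scenario (S : {set 'I_T}) :
  adv_obj cP cI cB bP x (scenario S) = budget_value S.
Proof.
rewrite -budget_value_if; apply: eq_bigr => t _.
by rewrite /scenario; case: ifP => // _; apply: period_cost_worst_demand.
Qed.

Lemma adv_obj_le_budget_value (D : 'I_T -> R) :
  in_Ud Dhat Delta Gamma D ->
  adv_obj cP cI cB bP x D <= budget_value [set t | D t != Dhat t].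
Proof.
move=> [_ D_range _]; rewrite -budget_value_if; apply: ler_sum => t _.
rewrite inE; case: eqVneq => [-> | _] //=; exact: period_cost_le_worst.
Qed.

Lemma budget_value_le_lp_obj (S : {set 'I_T}) pi alpha gamma :
  (#|S| <= Gamma)%N -> lp_feasible cP cI cB bP x Dhat Delta pi alpha gamma ->
  budget_value S <= lp_obj Gamma pi alpha gamma.
Proof.
move=> cardS [alpha_ge0 feas].
have nominal_le t : nominal_cost t <= pi t.
  by have [? ? _ _ _] := feas t; rewrite ge_max; apply/andP.
apply: (le_trans (y := \sum_t pi t + \sum_(t in S) (worst_cost t - pi t))).
  rewrite -budget_value_if -sumr_if_in; apply: ler_sum => t _.
  by case: ifP.
rewrite /lp_obj -addrA lerD2l; apply: sum_le_budget_dual => // t.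
  by have [_ _ _ _ ->] := feas t.
have [_ _ fI_le fB_le _] := feas t.
by rewrite lerBlDr ge_max; apply/andP; split; rewrite -lerBlDr.
Qed.

Lemma lp_feasible_top :
  lp_feasible cP cI cB bP x Dhat Delta nominal_cost
    (top_threshold Gamma excess) (top_excess Gamma excess).
Proof.
split; first exact: top_threshold_ge0.
move=> t.
have worst_le : worst_cost t <=
    top_threshold Gamma excess + top_excess Gamma excess t + nominal_cost t.
  by rewrite -lerBlDr; apply: le_top_threshold_excess.
split; rewrite ?lerBlDr.
- by rewrite le_max lexx.
- by rewrite le_max lexx orbT.
- by apply: le_trans worst_le; rewrite le_max lexx.
- by apply: le_trans worst_le; rewrite le_max lexx orbT.
- by apply: top_excess_ge0 => s; apply: excess_ge0.
Qed.

Lemma lp_obj_top :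
  lp_obj Gamma nominal_cost (top_threshold Gamma excess) (top_excess Gamma excess)
  = budget_value (top_set Gamma excess).
Proof. by rewrite /lp_obj -addrA top_dual_obj. Qed.

End Production.

Theorem lemma2 (R : realFieldType) (T : nat) (cP cI cB bP : R)
  (m : nat) (A : 'I_m -> 'I_T -> R) (b : 'I_m -> R)
  (Dhat Delta : 'I_T -> R) (Gamma : nat) (x : 'I_T -> R) :
  (1 <= T)%N ->
  0 <= cP -> 0 <= cI -> 0 <= cB -> 0 <= bP ->
  (forall t, 0 <= Dhat t) ->
  (forall i j : 'I_T, val j = (val i).+1 -> Dhat i <= Dhat j) ->
  (forall t, 0 <= Delta t <= Dhat t) ->
  (Gamma <= T)%N ->
  (* non-overlapping case *)
  (forall i j : 'I_T, val j = (val i).+1 -> Dhat i + Delta i <= Dhat j - Delta j) ->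
  in_plans A b x ->
  exists V : R,
    [/\ (* V is the optimal value of the LP (attained minimum) *)
        (exists pi alpha gamma,
            lp_feasible cP cI cB bP x Dhat Delta pi alpha gamma /\
            lp_obj Gamma pi alpha gamma = V),
        (forall pi alpha gamma,
            lp_feasible cP cI cB bP x Dhat Delta pi alpha gamma ->
            V <= lp_obj Gamma pi alpha gamma),
        (* V is the optimal value of the adversarial problem (attained maximum) *)
        (exists D, in_Ud Dhat Delta Gamma D /\ adv_obj cP cI cB bP x D = V)
      & (forall D, in_Ud Dhat Delta Gamma D -> adv_obj cP cI cB bP x D <= V)].
Proof.
move=> _ _ cI_ge0 cB_ge0 bP_ge0 _ _ Delta_range _ non_overlap _.
have Delta_ge0 t : 0 <= Delta t by have /andP[] := Delta_range t.
pose w := excess cP cI cB bP x Dhat Delta.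
exists (budget_value cP cI cB bP x Dhat Delta (top_set Gamma w)); split.
- exists (nominal_cost cP cI cB bP x Dhat), (top_threshold Gamma w), (top_excess Gamma w).
  by split; [apply: lp_feasible_top | apply: lp_obj_top].
- by move=> pi alpha gamma; apply: budget_value_le_lp_obj; apply: card_top_set.
- exists (scenario cP cI cB bP x Dhat Delta (top_set Gamma w)); split.
    by apply: scenario_in_Ud => //; apply: card_top_set.
  exact: adv_obj_scenario.
- move=> D D_in.
  apply: (le_trans (adv_obj_le_budget_value cP x cI_ge0 cB_ge0 bP_ge0 D_in)).
  rewrite lerD2l; apply: top_set_max.
  by have [_ _ ?] := D_in.
Qed.
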